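(* Let $m\ge2$, $n\ge1$ be integers. Let $\mathcal{A}\in\mathbb{SF}_{m,n}$ have no zero blocks, and let $\mathcal{P}=([n],\mathbb{E})$ be the $m$-uniform multi-hypergraph whose $(0,1)$ associated tensor is $\mathcal{A}$. Then the following are equivalent: (1) $\mathcal{A}$ is $\{0,1\}$-cp; (2) $\mathcal{P}$ is a union of complete blocks on a partition of the vertex set: there exist pairwise disjoint nonempty sets $V_1,\dots,V_q$ with $V_1\cup\dots\cup V_q=[n]$ (so $n_1+\dots+n_q=n$ where $n_i=|V_i|$) such that $\mathbb{E}$ is exactly the set of all multisets of size $m$ whose elements all lie in a single $V_i$ for some $i$; (3) there exist $q\ge1$ and vectors $\mathbf{u}_1,\dots,\mathbf{u}_q\in\{0,1\}^n$ with $\mathcal{A}=\sum_{j=1}^q\mathbf{u}_j^m$ such that the $n\times q$ matrix $U=[\mathbf{u}_1,\dots,\mathbf{u}_q]$ satisfies $U^{T}U=\mathrm{diag}(n_1,\dots,n_q)$ for positive integers $n_1,\dots,n_q$ with $n_1+\dots+n_q=n$.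
   Context: $S(m,n)=\{(i_1,\dots,i_m): i_k\in[n]\}$. $\mathbb{SF}_{m,n}$ is the set of symmetric $m$th order $n$-dimensional real tensors with all entries in $\{0,1\}$. For a nonempty $I\subseteq[n]$, the principal subtensor of $\mathcal{A}$ determined by $I$ is the tensor $(a_{i_1\cdots i_m})$ with all $i_k\in I$; a zero block is a principal subtensor all of whose entries are $0$. For $\mathbf{u}\in\mathbb{R}^n$, $\mathbf{u}^m$ is the tensor with entries $u_{i_1}\cdots u_{i_m}$. A symmetric tensor $\mathcal{A}$ is $\{0,1\}$-cp if $\mathcal{A}=\sum_{j=1}^q\mathbf{u}_j^m$ for some $q\ge1$ and $\mathbf{u}_j\in\{0,1\}^n$. An $m$-uniform multi-hypergraph on $[n]$ is a pair $([n],\mathbb{E})$ with $\mathbb{E}$ a set of multisets of elements of $[n]$, each of cardinality $m$ counting repetitions. Its $(0,1)$ associated tensor is the tensor $\mathcal{A}\in\mathbb{SF}_{m,n}$ with $a_{i_1\cdots i_m}=1$ if the multiset $\{i_1,\dots,i_m\}\in\mathbb{E}$ and $0$ otherwise. *)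

From HB Require Import structures.
From mathcomp Require Import all_boot all_order all_algebra all_fingroup.
Set Implicit Arguments. Unset Strict Implicit. Unset Printing Implicit Defensive.

Definition idx (m n : nat) := {ffun 'I_m -> 'I_n}.

(** Real m-th order n-dimensional tensors with 0/1 (hence natural-number)
    entries; entries are stored in nat. *)
Definition tensor (m n : nat) := idx m n -> nat.

Definition symmetric_tensor m n (A : tensor m n) : Prop :=
  forall (s : 'S_m) (i : idx m n), A [ffun k => i (s k)] = A i.

Definition in_SF m n (A : tensor m n) : Prop :=
  symmetric_tensor A /\ forall i, A i = 0 \/ A i = 1.

Definition has_zero_block m n (A : tensor m n) : Prop :=
  exists I : {set 'I_n}, I != set0 /\
    forall i : idx m n, (forall k, i k \in I) -> A i = 0.

Definition tpow (m : nat) {n : nat} (u : 'I_n -> nat) : tensor m n :=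
  fun i => \prod_(k < m) u (i k).
Arguments tpow m {n} u i.

Definition is01cp m n (A : tensor m n) : Prop :=
  exists q : nat, 0 < q /\
    exists u : 'I_q -> 'I_n -> nat,
      (forall j x, u j x = 0 \/ u j x = 1) /\
      forall i, A i = \sum_(j < q) tpow m (u j) i.

(** Multisets over [n] are represented by multiplicity functions. *)
Definition mset (n : nat) := {ffun 'I_n -> nat}.

Definition mcard n (M : mset n) : nat := \sum_(x < n) M x.

Definition mset_of m n (i : idx m n) : mset n :=
  [ffun x => #|[set k | i k == x]|].

Definition is_assoc_tensor m n (E : pred (mset n)) (A : tensor m n) : Prop :=
  (forall M, E M -> mcard M = m) /\
  forall i : idx m n, A i = (if E (mset_of i) then 1 else 0).

Definition colmx n q (u : 'I_q -> 'I_n -> nat) : 'M[nat]_(n, q) :=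
  (\matrix_(x < n, j < q) u j x)%R.

Definition diagn q (nn : 'I_q -> nat) : 'M[nat]_q :=
  diag_mx (\row_(j < q) nn j)%R.

From HB Require Import structures.
From mathcomp Require Import all_boot all_order all_algebra all_fingroup.

(* Write the summands of a {0,1}-cp decomposition as u_j = 1_{S_j}. The entry
   of A at the constant index (x, ..., x) counts the sets S_j containing x;
   since it is 0 or 1 and cannot vanish (no zero block on {x}), every vertex
   lies in exactly one S_j. Hence the nonempty S_j partition [n], and an entry
   A_i is 1 exactly when all indices of i lie in a common block, which is
   statement (2). Conversely, the indicator vectors of the blocks of a
   partition have pairwise disjoint supports, so they decompose A and satisfy
   U^T U = diag(|V_1|, ..., |V_q|). *)

Set Implicit Arguments. Unset Strict Implicit. Unset Printing Implicit Defensive.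

Definition indic n (S : {set 'I_n}) (x : 'I_n) : nat := x \in S.

Definition block_tensor m n (P : {set {set 'I_n}}) : tensor m n :=
  fun i => [exists V in P, [forall k, i k \in V]].
Arguments block_tensor m {n} P i.

Definition is01cp_orth m n (A : tensor m n) : Prop :=
  exists q : nat, 0 < q /\
  exists u : 'I_q -> 'I_n -> nat,
    (forall j x, u j x = 0 \/ u j x = 1) /\
    (forall i, A i = \sum_(j < q) tpow m (u j) i) /\
    exists nn : 'I_q -> nat,
      (forall j, 0 < nn j) /\ \sum_(j < q) nn j = n /\
      ((colmx u)^T *m colmx u)%R = diagn nn.

Lemma indic01 n (S : {set 'I_n}) x : indic S x = 0 \/ indic S x = 1.
Proof. by rewrite /indic; case: (x \in S); [right | left]. Qed.

Lemma indic_of01 n (u : 'I_n -> nat) :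
  (forall x, u x = 0 \/ u x = 1) -> u =1 indic [set x | u x == 1].
Proof. by move=> u01 x; rewrite /indic inE; case: (u01 x) => ->. Qed.

Lemma tpow_indic m n (S : {set 'I_n}) (i : idx m n) :
  tpow m (indic S) i = [forall k, i k \in S].
Proof.
rewrite /tpow; case: forallP => [iS | /forallP/forallPn[k ikS]].
  by rewrite big1 // => k _; rewrite /indic iS.
by rewrite (bigD1 k) //= /indic (negbTE ikS).
Qed.

Lemma sum_exclusive_bool (I : finType) (F : pred I) :
  (forall a b, F a -> F b -> a = b) -> \sum_i F i = [exists i, F i].
Proof.
move=> F_uniq; case: existsP => [[a Fa] | noF].
  rewrite (bigD1 a) //= Fa big1 // => j neq_ja; case Fj: (F j) => //.
  by rewrite (F_uniq _ _ Fj Fa) eqxx in neq_ja.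
by rewrite big1 // => j _; case Fj: (F j) => //; case: noF; exists j.
Qed.

Lemma sum_tpow_indic_disjoint m n q (S : 'I_q -> {set 'I_n}) (i : idx m n) :
  0 < m -> (forall a b, a != b -> [disjoint S a & S b]) ->
  \sum_j tpow m (indic (S j)) i = [exists j, [forall k, i k \in S j]].
Proof.
move=> m_gt0 disjS; under eq_bigr do rewrite tpow_indic.
apply: sum_exclusive_bool => a b /forallP iSa /forallP iSb.
have k0 : 'I_m := Ordinal m_gt0.
case: (eqVneq a b) => // neq_ab.
by move: (iSb k0); rewrite (disjointFr (disjS a b neq_ab) (iSa k0)).
Qed.

Lemma gram_colmx_indic n q (S : 'I_q -> {set 'I_n}) :
  ((colmx (fun j => indic (S j)))^T *m colmx (fun j => indic (S j)))%R
  = (\matrix_(a, b) #|S a :&: S b|)%R.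
Proof.
apply/matrixP => a b; rewrite !mxE -sum1_card [RHS]big_mkcond.
apply: (big_rec2 (fun y1 y2 : nat => y1 = y2)) => // x y1 y2 _ ->.
by rewrite !mxE /indic inE; case: (x \in S a); case: (x \in S b).
Qed.

Lemma mcard_mset_of m n (i : idx m n) : mcard (mset_of i) = m.
Proof.
rewrite /mcard -[RHS]card_ord -sum1_card (partition_big i predT) //=.
by apply: eq_bigr => x _; rewrite ffunE -sum1_card; apply: eq_bigl => k; rewrite inE.
Qed.

Lemma mset_of_supportP m n (i : idx m n) (V : {set 'I_n}) :
  (forall x, 0 < mset_of i x -> x \in V) <-> (forall k, i k \in V).
Proof.
split=> [iV k | iV x].
  by apply: iV; rewrite ffunE card_gt0; apply/set0Pn; exists k; rewrite inE.
by rewrite ffunE card_gt0 => /set0Pn[k]; rewrite inE => /eqP <-.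
Qed.

Lemma mset_of_onto m n (M : mset n) :
  mcard M = m -> exists i : idx m n, mset_of i = M.
Proof.
move=> cardM.
pose s := flatten [seq nseq (M y) y | y <- enum 'I_n].
have count_s (a : pred 'I_n) : count a s = \sum_y a y * M y.
  rewrite count_flatten -map_comp sumnE big_map big_enum /=.
  by apply: eq_bigr => y _; rewrite count_nseq.
have size_s : size s == m.
  by rewrite -count_predT count_s -cardM; apply/eqP/eq_bigr => y _; rewrite mul1n.
exists [ffun k => tnth (Tuple size_s) k]; apply/ffunP => x.
have count_x : count (pred1 x) s = M x.
  by rewrite count_s (bigD1 x) //= eqxx mul1n big1 ?addn0 // => y /negPf /= ->.
rewrite !ffunE -sum1_card -count_x -sum1_count -[s]/(tval (Tuple size_s)) big_tuple.
by apply: eq_bigl => k; rewrite !inE ffunE.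
Qed.

Lemma assoc_tensor_blocksP m n (A : tensor m n) (E : pred (mset n))
    (P : {set {set 'I_n}}) :
  is_assoc_tensor E A ->
  (forall M, E M <-> mcard M = m /\
                     exists2 V, V \in P & forall x, 0 < M x -> x \in V)
  <-> A =1 block_tensor m P.
Proof.
move=> [cardE AE]; split=> [EP i | AP M].
  rewrite AE /block_tensor; congr nat_of_bool; apply/idP/existsP.
    by case/EP=> _ [V PV /mset_of_supportP iV]; exists V; rewrite PV; apply/forallP.
  case=> V /andP[PV /forallP iV]; apply/EP; split; first exact: mcard_mset_of.
  by exists V => //; apply/mset_of_supportP.
split=> [EM | [/mset_of_onto[i <-] [V PV /mset_of_supportP iV]]].
  have [i iM] := mset_of_onto (cardE M EM); split; first exact: cardE.
  have : block_tensor m P i = 1 by rewrite -AP AE iM EM.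
  rewrite /block_tensor; case: exists_inP => // -[V PV /forallP iV] _.
  by exists V; rewrite // -iM; apply/mset_of_supportP.
have : block_tensor m P i = 1.
  by rewrite /block_tensor; case: exists_inP => // -[]; exists V => //; apply/forallP.
by rewrite -AP AE; case: (E _).
Qed.

Lemma block_tensor_imset m n q (S : 'I_q -> {set 'I_n}) (J : {set 'I_q}) i :
  block_tensor m (S @: J) i = [exists j, (j \in J) && [forall k, i k \in S j]].
Proof.
congr nat_of_bool; apply/exists_inP/existsP.
  by case=> _ /imsetP[j Jj ->] iS; exists j; rewrite Jj.
by case=> j /andP[Jj iS]; exists (S j); first exact: imset_f.
Qed.

Section ExactCover.

Variables (T : finType) (q : nat) (S : 'I_q -> {set T}).
Hypothesis S_exact : forall x, \sum_j (x \in S j) = 1.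

Lemma exact_cover_disjoint a b : a != b -> [disjoint S a & S b].
Proof.
move=> neq_ab; apply/pred0P => x /=; apply/negbTE/negP => /andP[xSa xSb].
have := S_exact x; rewrite (bigD1 a) // (bigD1 b) 1?eq_sym //= xSa xSb.
by rewrite add1n addSn.
Qed.

Lemma exact_cover_partition : partition (S @: [set j | S j != set0]) [set: T].
Proof.
have S0 : set0 \notin S @: [set j | S j != set0].
  by apply/imsetP => -[j]; rewrite inE => /[swap] <-; rewrite eqxx.
have [trivS _] : trivIset (S @: [set j | S j != set0])
                /\ {in [set j | S j != set0] &, injective S}.
  by apply: trivIimset S0 => a b _ _; rewrite eq_sym; apply: exact_cover_disjoint.
apply/and3P; split => //; rewrite cover_imset; apply/eqP/setP => x.
have /eqP/sum_nat_eq1[j [_ xSj _]] := S_exact x.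
rewrite inE; apply/bigcupP; exists j; last by case: (x \in S j) xSj.
by rewrite inE; apply/set0Pn; exists x; case: (x \in S j) xSj.
Qed.

End ExactCover.

Lemma is01cp_blocks m n (A : tensor m n) :
  0 < m -> (forall i, A i <= 1) -> ~ has_zero_block A -> is01cp A ->
  exists2 P, partition P [set: 'I_n] & A =1 block_tensor m P.
Proof.
move=> m_gt0 A_le1 A_nz [q [_ [u [u01 Au]]]].
pose S j := [set x | u j x == 1].
have AS i : A i = \sum_j tpow m (indic (S j)) i.
  by rewrite Au; apply: eq_bigr => j _; apply: eq_bigr => k _; rewrite -indic_of01.
pose cst x : idx m n := [ffun=> x].
have A_cst x : A (cst x) = \sum_j (x \in S j).
  rewrite AS; apply: eq_bigr => j _; rewrite tpow_indic; congr nat_of_bool.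
  by apply/forallP/idP => [/(_ (Ordinal m_gt0)) | xS k]; rewrite ffunE.
have S_exact x : \sum_j (x \in S j) = 1.
  rewrite -A_cst; apply/eqP; rewrite eqn_leq A_le1 lt0n; apply/eqP => A0.
  apply: A_nz; exists [set x]; split; first by apply/set0Pn; exists x; rewrite inE.
  move=> i ix; rewrite -A0; congr A; apply/ffunP => k.
  by rewrite ffunE; apply/set1P/ix.
exists (S @: [set j | S j != set0]); first exact: exact_cover_partition.
move=> i; rewrite AS sum_tpow_indic_disjoint //; last exact: exact_cover_disjoint.
rewrite block_tensor_imset; congr nat_of_bool; apply: eq_existsb => j.
rewrite inE; case: forallP => [iS | _]; rewrite ?andbF // andbT.
by apply/esym/set0Pn; exists (i (Ordinal m_gt0)).
Qed.

Lemma blocks_is01cp_orth m n (A : tensor m n) (P : {set {set 'I_n}}) :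
  0 < m -> 0 < n -> partition P [set: 'I_n] -> A =1 block_tensor m P ->
  is01cp_orth A.
Proof.
move=> m_gt0 n_gt0 partP AP; pose S (j : 'I_#|P|) := enum_val j.
have PS : P = S @: setT.
  apply/setP => V; apply/idP/imsetP => [PV | [j _ ->]]; last exact: enum_valP.
  by exists (enum_rank_in PV V); rewrite ?in_setT // /S enum_rankK_in.
have disjS a b : a != b -> [disjoint S a & S b].
  move=> neq_ab; apply: (trivIsetP (partition_trivIset partP));
    by rewrite ?enum_valP ?(inj_eq enum_val_inj).
have : Ordinal n_gt0 \in cover P by rewrite (cover_partition partP) inE.
case/bigcupP=> V PV _.
exists #|P|; split; first by apply/card_gt0P; exists V.
exists (fun j => indic (S j)); split; first by move=> j x; apply: indic01.
split.
  move=> i; rewrite AP sum_tpow_indic_disjoint // [P in block_tensor _ P]PS.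
  rewrite block_tensor_imset.
  by congr nat_of_bool; apply: eq_existsb => j; rewrite in_setT.
exists (fun j => #|S j|); split.
  by move=> j; rewrite card_gt0; apply: (partition_neq0 partP); apply: enum_valP.
split.
  rewrite -(big_enum_val (fun B : {set 'I_n} => #|B|)) -(card_partition partP).
  by rewrite cardsT card_ord.
rewrite gram_colmx_indic; apply/matrixP => a b; rewrite !mxE.
have [<- | neq_ab] := eqVneq a b; first by rewrite setIid.
by rewrite disjoint_setI0 ?cards0 // disjS.
Qed.

Theorem mainTheorem4 (m n : nat) (hm : 2 <= m) (hn : 1 <= n)
  (A : tensor m n) (hA : in_SF A) (hnz : ~ has_zero_block A)
  (E : pred (mset n)) (hE : is_assoc_tensor E A) :
  (is01cp A <->
   exists P : {set {set 'I_n}}, partition P [set: 'I_n] /\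
     forall M : mset n,
       E M <-> (mcard M = m /\
                exists2 V, V \in P & forall x, 0 < M x -> x \in V)) /\
  (is01cp A <->
   exists q : nat, 0 < q /\
   exists u : 'I_q -> 'I_n -> nat,
     (forall j x, u j x = 0 \/ u j x = 1) /\
     (forall i, A i = \sum_(j < q) tpow m (u j) i) /\
     exists nn : 'I_q -> nat,
       (forall j, 0 < nn j) /\ \sum_(j < q) nn j = n /\
       ((colmx u)^T *m colmx u)%R = diagn nn).
Proof.
have m_gt0 : 0 < m by apply: leq_trans hm.
have A_le1 i : A i <= 1 by case: (hA.2 i) => ->.
have cp_blocks := is01cp_blocks m_gt0 A_le1 hnz.
have orth_cp : is01cp_orth A -> is01cp A.
  by case=> q [q_gt0 [u [u01 [Au _]]]]; exists q; split=> //; exists u.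
split; split.
- case/cp_blocks=> P partP AP.
  by exists P; split; last exact/(assoc_tensor_blocksP P hE).
- case=> P [partP EP]; apply/orth_cp/(blocks_is01cp_orth m_gt0 hn partP).
  exact/(assoc_tensor_blocksP P hE).
- by case/cp_blocks=> P partP; apply: blocks_is01cp_orth partP.
- exact: orth_cp.
Qed.
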